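(* $\mathcal C_q^{3,4,\infty,\infty}\neq\mathcal C_{qs}^{3,4,\infty,\infty}$.
   Context: A strategy: Hilbert spaces $\mathcal H_A,\mathcal H_B$ (possibly infinite-dimensional), a unit vector $|\psi\rangle\in\mathcal H_A\otimes\mathcal H_B$, and projective measurements $\{A^a_x\}_{a\in\mathcal A}$ on $\mathcal H_A$, $\{B^b_y\}_{b\in\mathcal B}$ on $\mathcal H_B$, producing $p(a,b|x,y)=\langle\psi|A^a_x\otimes B^b_y|\psi\rangle$. $\mathcal C_{qs}^{3,4,\infty,\infty}$ is the set of correlations with question sets of sizes 3 and 4 and countably infinite answer sets produced by some strategy; $\mathcal C_{q}^{3,4,\infty,\infty}$ is the subset produced by strategies whose state $|\psi\rangle$ has finite Schmidt rank. *)

(* Complex numbers are modelled as pairs of reals;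
   the (separable) Hilbert space is l^2(N) of complex sequences, and the
   bipartite space H_A (x) H_B is l^2(N x N) (complex double sequences). *)
From Stdlib Require Import Reals.
Open Scope R_scope.

Definition C : Type := (R * R)%type.
Definition C0 : C := (0, 0).
Definition Cadd (z w : C) : C := (fst z + fst w, snd z + snd w).
Definition Cmul (z w : C) : C :=
  (fst z * fst w - snd z * snd w, fst z * snd w + snd z * fst w).
Definition Cconj (z : C) : C := (fst z, - snd z).
Definition Copp (z : C) : C := (- fst z, - snd z).
Definition Cnorm2 (z : C) : R := fst z * fst z + snd z * snd z.

Definition csum_to (f : nat -> C) (l : C) : Prop :=
  infinite_sum (fun n => fst (f n)) (fst l) /\
  infinite_sum (fun n => snd (f n)) (snd l).

Fixpoint Csum (n : nat) (f : nat -> C) : C :=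
  match n with
  | O => C0
  | S m => Cadd (Csum m f) (f m)
  end.

Definition vec : Type := nat -> C.
Definition is_l2 (v : vec) : Prop :=
  exists l, infinite_sum (fun i => Cnorm2 (v i)) l.

Definition inner_is (u v : vec) (l : C) : Prop :=
  csum_to (fun i => Cmul (Cconj (u i)) (v i)) l.

(** Operators on l^2(N) (only their action on l^2 vectors matters) *)
Definition op : Type := vec -> vec.

Definition is_linear_l2 (A : op) : Prop :=
  forall (u v : vec) (c : C), is_l2 u -> is_l2 v ->
    forall i, A (fun k => Cadd (u k) (Cmul c (v k))) i
              = Cadd (A u i) (Cmul c (A v i)).

Definition is_projection (A : op) : Prop :=
  (forall v, is_l2 v -> is_l2 (A v)) /\
  is_linear_l2 A /\
  (forall v, is_l2 v -> forall i, A (A v) i = A v i) /\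
  (forall u v, is_l2 u -> is_l2 v ->
     exists l, inner_is (A u) v l /\ inner_is u (A v) l).

Fixpoint vsum (n : nat) (f : nat -> vec) : vec :=
  match n with
  | O => fun _ => C0
  | S m => fun i => Cadd (vsum m f i) (f m i)
  end.

(** Projective measurement with outcome set N: projections summing to the
    identity in the strong operator topology. *)
Definition is_PVM (A : nat -> op) : Prop :=
  (forall a, is_projection (A a)) /\
  (forall v, is_l2 v ->
     forall eps, eps > 0 -> exists N0, forall N, (N >= N0)%nat ->
       forall l, infinite_sum
                   (fun i => Cnorm2 (Cadd (vsum N (fun a => A a v) i) (Copp (v i)))) l ->
                 l < eps).

(** Bipartite states: psi i j, i indexes H_A = l^2(N), j indexes H_B = l^2(N) *)
Definition bivec : Type := nat -> nat -> C.

Definition is_unit_state (psi : bivec) : Prop :=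
  exists r : nat -> R,
    (forall i, infinite_sum (fun j => Cnorm2 (psi i j)) (r i)) /\
    infinite_sum r 1.

(** A (x) I and I (x) B acting on bipartite vectors *)
Definition tensor_left (A : op) (psi : bivec) : bivec :=
  fun i j => A (fun i' => psi i' j) i.
Definition tensor_right (B : op) (psi : bivec) : bivec :=
  fun i j => B (psi i) j.

(** <psi | (A (x) B) | psi> = p  (as an iterated, absolutely convergent sum) *)
Definition expect_is (psi : bivec) (A B : op) (p : R) : Prop :=
  let phi := tensor_left A (tensor_right B psi) in
  exists rowsum : nat -> C,
    (forall i, csum_to (fun j => Cmul (Cconj (psi i j)) (phi i j)) (rowsum i)) /\
    csum_to rowsum (p, 0).

Definition finite_schmidt_rank (psi : bivec) : Prop :=
  exists (r : nat) (u v : nat -> vec),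
    (forall k, (k < r)%nat -> is_l2 (u k) /\ is_l2 (v k)) /\
    (forall i j, psi i j = Csum r (fun k => Cmul (u k i) (v k j))).

(** Correlations p a b x y with x in {0,1,2}, y in {0,1,2,3}, a b in N *)
Definition correlation : Type := nat -> nat -> nat -> nat -> R.

Definition produces (p : correlation) (psi : bivec)
    (A : nat -> nat -> op) (B : nat -> nat -> op) : Prop :=
  is_unit_state psi /\
  (forall x, (x < 3)%nat -> is_PVM (A x)) /\
  (forall y, (y < 4)%nat -> is_PVM (B y)) /\
  (forall x y a b, (x < 3)%nat -> (y < 4)%nat ->
     expect_is psi (A x a) (B y b) (p a b x y)).

Definition C_qs_3_4 (p : correlation) : Prop :=
  exists psi A B, produces p psi A B.

Definition C_q_3_4 (p : correlation) : Prop :=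
  exists psi A B, produces p psi A B /\ finite_schmidt_rank psi.

(* Measure both halves of [psi = sum_i c_i |i>|i>] (all [c_i <> 0]) in the computational
   basis: [p(a,b|0,0) = c_a^2 delta_ab] is an infinite diagonal matrix with nonzero diagonal.
   If instead [psi = sum_{k<r} u_k (x) v_k] has Schmidt rank [r], then
   [p(a,b|0,0) = Re sum_{l,k<r} <u_l, A_a u_k> <v_l, B_b v_k>], a real dot product in
   dimension [2r^2]; so the matrix has rank at most [2r^2], and its leading
   [(2r^2+1) x (2r^2+1)] block cannot be diagonal with nonzero diagonal. *)
From Stdlib Require Import Reals Lra Lia List FunctionalExtensionality IndefiniteDescription Classical.
Import ListNotations.
Open Scope R_scope.

Lemma Un_cv_const (a : R) : Un_cv (fun _ => a) a.
Proof.
  intros e He; exists 0%nat; intros n _.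
  unfold Rdist; rewrite Rminus_diag, Rabs_R0; lra.
Qed.

Lemma sum_f_R0_scal (a : R) (f : nat -> R) n :
  sum_f_R0 (fun i => a * f i) n = a * sum_f_R0 f n.
Proof. induction n as [|n IH]; simpl; [|rewrite IH]; ring. Qed.

Lemma infinite_sum_ext (f g : nat -> R) l :
  (forall n, f n = g n) -> infinite_sum f l -> infinite_sum g l.
Proof.
  intros H Hf; apply (Un_cv_ext (sum_f_R0 f)); auto.
  intros n; apply sum_eq; auto.
Qed.

Lemma infinite_sum_lincomb (f g h : nat -> R) a b l1 l2 l :
  infinite_sum f l1 -> infinite_sum g l2 ->
  (forall n, h n = a * f n + b * g n) -> l = a * l1 + b * l2 ->
  infinite_sum h l.
Proof.
  intros Hf Hg Hh ->.
  apply (Un_cv_ext (fun n => a * sum_f_R0 f n + b * sum_f_R0 g n)).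
  - intros n; rewrite <- !sum_f_R0_scal, <- sum_plus.
    apply sum_eq; intros; symmetry; apply Hh.
  - apply CV_plus; apply CV_mult; auto; apply Un_cv_const.
Qed.

Lemma infinite_sum_finite_support (f : nat -> R) M :
  (forall n, (M < n)%nat -> f n = 0) -> infinite_sum f (sum_f_R0 f M).
Proof.
  intros H e He; exists M; intros n Hn.
  replace (sum_f_R0 f n) with (sum_f_R0 f M).
  - unfold Rdist; rewrite Rminus_diag, Rabs_R0; lra.
  - induction Hn as [|n Hn IH]; [reflexivity|].
    simpl; rewrite <- IH, (H (S n)) by lia; ring.
Qed.

Lemma infinite_sum_single (f : nat -> R) a l :
  (forall n, n <> a -> f n = 0) -> f a = l -> infinite_sum f l.
Proof.
  intros H <-.
  replace (f a) with (sum_f_R0 f a).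
  - apply infinite_sum_finite_support; intros; apply H; lia.
  - destruct a as [|a]; [reflexivity|]; simpl.
    rewrite sum_eq_R0 by (intros; apply H; lia); ring.
Qed.

Lemma infinite_sum_zero : infinite_sum (fun _ => 0) 0.
Proof. apply (infinite_sum_single _ 0%nat); auto. Qed.

Lemma C_eq (z w : C) : fst z = fst w -> snd z = snd w -> z = w.
Proof. destruct z, w; simpl; intros; subst; reflexivity. Qed.

Lemma Cmul_comm z w : Cmul z w = Cmul w z.
Proof. apply C_eq; simpl; ring. Qed.

Lemma Csum_ext n f g : (forall k, (k < n)%nat -> f k = g k) -> Csum n f = Csum n g.
Proof.
  induction n as [|n IH]; intros H; simpl; auto.
  rewrite IH by (intros; apply H; lia); rewrite H by lia; reflexivity.
Qed.

Lemma Cconj_Csum n f : Cconj (Csum n f) = Csum n (fun k => Cconj (f k)).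
Proof. induction n as [|n IH]; simpl; [|rewrite <- IH]; apply C_eq; simpl; ring. Qed.

Lemma Cmul_Csum_l n f z : Cmul (Csum n f) z = Csum n (fun k => Cmul (f k) z).
Proof. induction n as [|n IH]; simpl; [|rewrite <- IH]; apply C_eq; simpl; ring. Qed.

Lemma Cmul_Csum_r n f z : Cmul z (Csum n f) = Csum n (fun k => Cmul z (f k)).
Proof. induction n as [|n IH]; simpl; [|rewrite <- IH]; apply C_eq; simpl; ring. Qed.

Lemma csum_to_ext f g l : (forall n, f n = g n) -> csum_to f l -> csum_to g l.
Proof. intros H; replace g with f by (apply functional_extensionality; auto); auto. Qed.

Lemma csum_to_unique f l1 l2 : csum_to f l1 -> csum_to f l2 -> l1 = l2.
Proof. intros [H1 H2] [H3 H4]; apply C_eq; eapply uniqueness_sum; eauto. Qed.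

Lemma csum_to_add f g l1 l2 : csum_to f l1 -> csum_to g l2 ->
  csum_to (fun n => Cadd (f n) (g n)) (Cadd l1 l2).
Proof.
  intros [H1 H2] [H3 H4]; split; simpl.
  - apply (infinite_sum_lincomb _ _ _ 1 1 _ _ _ H1 H3); intros; simpl; ring.
  - apply (infinite_sum_lincomb _ _ _ 1 1 _ _ _ H2 H4); intros; simpl; ring.
Qed.

Lemma csum_to_scal_l f z l : csum_to f l -> csum_to (fun n => Cmul z (f n)) (Cmul z l).
Proof.
  intros [H1 H2]; split; simpl.
  - apply (infinite_sum_lincomb _ _ _ (fst z) (- snd z) _ _ _ H1 H2); intros; simpl; ring.
  - apply (infinite_sum_lincomb _ _ _ (snd z) (fst z) _ _ _ H1 H2); intros; simpl; ring.
Qed.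

Lemma csum_to_scal_r f z l : csum_to f l -> csum_to (fun n => Cmul (f n) z) (Cmul l z).
Proof.
  intros H; rewrite Cmul_comm.
  eapply csum_to_ext; [|apply csum_to_scal_l; eauto]; intros; apply Cmul_comm.
Qed.

Lemma csum_to_zero : csum_to (fun _ => C0) C0.
Proof. split; apply infinite_sum_zero. Qed.

Lemma csum_to_Csum n (f : nat -> nat -> C) L :
  (forall k, (k < n)%nat -> csum_to (f k) (L k)) ->
  csum_to (fun j => Csum n (fun k => f k j)) (Csum n L).
Proof.
  induction n as [|n IH]; intros H; simpl; [apply csum_to_zero|].
  apply csum_to_add; [apply IH; intros|]; apply H; lia.
Qed.

Lemma csum_to_single (f : nat -> C) a l :
  (forall n, n <> a -> f n = C0) -> f a = l -> csum_to f l.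
Proof.
  intros H <-; split; apply (infinite_sum_single _ a); auto;
    intros n Hn; rewrite H; auto.
Qed.

Lemma Cnorm2_nonneg z : 0 <= Cnorm2 z.
Proof. unfold Cnorm2; nra. Qed.

Lemma is_l2_zero : is_l2 (fun _ => C0).
Proof.
  exists 0; eapply infinite_sum_ext; [|apply infinite_sum_zero].
  intros; unfold Cnorm2; simpl; ring.
Qed.

(* Domination by [2 |u_k|^2 + 2 |c|^2 |v_k|^2]. *)
Lemma is_l2_lincomb u v c : is_l2 u -> is_l2 v ->
  is_l2 (fun k => Cadd (u k) (Cmul c (v k))).
Proof.
  intros [lu Hu] [lv Hv].
  destruct (Rseries_CV_comp (fun k => Cnorm2 (Cadd (u k) (Cmul c (v k))))
      (fun k => 2 * Cnorm2 (u k) + (2 * Cnorm2 c) * Cnorm2 (v k))) as [l Hl].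
  - intros n; split; [apply Cnorm2_nonneg|].
    destruct (u n) as [a b], (v n) as [x y], c as [c1 c2].
    unfold Cnorm2, Cadd, Cmul; simpl.
    pose proof (pow2_ge_0 (a - (c1 * x - c2 * y))).
    pose proof (pow2_ge_0 (b - (c1 * y + c2 * x))).
    nra.
  - exists (2 * lu + (2 * Cnorm2 c) * lv).
    exact (infinite_sum_lincomb _ _ _ 2 (2 * Cnorm2 c) _ _ _ Hu Hv (fun _ => eq_refl) eq_refl).
  - exists l; exact Hl.
Qed.

Lemma is_l2_Csum n (c : nat -> C) (w : nat -> vec) :
  (forall k, (k < n)%nat -> is_l2 (w k)) ->
  is_l2 (fun j => Csum n (fun k => Cmul (c k) (w k j))).
Proof.
  induction n as [|n IH]; intros H; simpl; [apply is_l2_zero|].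
  apply (is_l2_lincomb (fun j => Csum n (fun k => Cmul (c k) (w k j))) (w n) (c n));
    [apply IH; intros|]; apply H; lia.
Qed.

Lemma linear_l2_zero (A : op) : is_linear_l2 A -> forall i, A (fun _ => C0) i = C0.
Proof.
  intros HA i.
  assert (H : A (fun _ => C0) i = Cadd (A (fun _ => C0) i) (Cmul (1, 0) (A (fun _ => C0) i))).
  { rewrite <- (HA _ _ (1, 0) is_l2_zero is_l2_zero i).
    f_equal; apply functional_extensionality; intros; apply C_eq; simpl; ring. }
  revert H; generalize (A (fun _ => C0) i); intros [x y] H.
  pose proof (f_equal fst H); pose proof (f_equal snd H); simpl in *.
  apply C_eq; simpl; lra.
Qed.

Lemma linear_l2_Csum (A : op) : is_linear_l2 A ->
  forall n (c : nat -> C) (w : nat -> vec), (forall k, (k < n)%nat -> is_l2 (w k)) ->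
  forall i, A (fun j => Csum n (fun k => Cmul (c k) (w k j))) i
            = Csum n (fun k => Cmul (c k) (A (w k) i)).
Proof.
  intros HA n; induction n as [|n IH]; intros c w Hw i; simpl.
  - apply linear_l2_zero; auto.
  - rewrite <- IH by (intros; apply Hw; lia).
    apply (HA (fun j => Csum n (fun k => Cmul (c k) (w k j))) (w n) (c n));
      [apply is_l2_Csum; intros|]; apply Hw; lia.
Qed.

Section FiniteSchmidtExpectation.

Variables (psi : bivec) (A B : op) (r : nat) (u v : nat -> vec).
Hypothesis (HA : is_linear_l2 A) (HB : is_linear_l2 B).
Hypothesis Huv : forall k, (k < r)%nat -> is_l2 (u k) /\ is_l2 (v k).
Hypothesis Hpsi : forall i j, psi i j = Csum r (fun k => Cmul (u k i) (v k j)).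

Lemma tensor_schmidt i j :
  tensor_left A (tensor_right B psi) i j = Csum r (fun k => Cmul (B (v k) j) (A (u k) i)).
Proof.
  unfold tensor_left, tensor_right.
  assert (HBrow : forall i', B (psi i') j = Csum r (fun k => Cmul (B (v k) j) (u k i'))).
  { intros i'.
    replace (psi i') with (fun j => Csum r (fun k => Cmul (u k i') (v k j)))
      by (apply functional_extensionality; intros; symmetry; apply Hpsi).
    rewrite linear_l2_Csum by (auto; intros; apply Huv; auto).
    apply Csum_ext; intros; apply Cmul_comm. }
  replace (fun i' => B (psi i') j) with (fun i' => Csum r (fun k => Cmul (B (v k) j) (u k i')))
    by (apply functional_extensionality; intros; symmetry; apply HBrow).
  apply linear_l2_Csum; auto; intros; apply Huv; auto.
Qed.

Lemma expect_schmidt (al be : nat -> nat -> C) p :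
  (forall l k, (l < r)%nat -> (k < r)%nat -> inner_is (u l) (A (u k)) (al l k)) ->
  (forall l k, (l < r)%nat -> (k < r)%nat -> inner_is (v l) (B (v k)) (be l k)) ->
  expect_is psi A B p ->
  (p, 0) = Csum r (fun l => Csum r (fun k => Cmul (al l k) (be l k))).
Proof.
  intros Hal Hbe [rowsum [Hrow Htot]].
  assert (Hterm : forall i j,
    Cmul (Cconj (psi i j)) (tensor_left A (tensor_right B psi) i j)
    = Csum r (fun l => Csum r (fun k => Cmul (Cmul (Cconj (u l i)) (A (u k) i))
                                              (Cmul (Cconj (v l j)) (B (v k) j))))).
  { intros i j; rewrite tensor_schmidt, Hpsi, Cconj_Csum, Cmul_Csum_l.
    apply Csum_ext; intros l _; rewrite Cmul_Csum_r.
    apply Csum_ext; intros k _; apply C_eq; simpl; ring. }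
  assert (Hrowsum : forall i, rowsum i = Csum r (fun l => Csum r (fun k =>
            Cmul (Cmul (Cconj (u l i)) (A (u k) i)) (be l k)))).
  { intros i; eapply csum_to_unique; [apply Hrow|].
    eapply csum_to_ext; [intros j; symmetry; apply Hterm|].
    apply csum_to_Csum; intros l Hl; apply csum_to_Csum; intros k Hk.
    apply csum_to_scal_l, Hbe; auto. }
  eapply csum_to_unique; [eapply csum_to_ext; [apply Hrowsum|exact Htot]|].
  apply csum_to_Csum; intros l Hl; apply csum_to_Csum; intros k Hk.
  apply csum_to_scal_r, Hal; auto.
Qed.

End FiniteSchmidtExpectation.

Fixpoint lsum {T} (ts : list T) (g : T -> R) : R :=
  match ts with [] => 0 | t :: ts' => g t + lsum ts' g end.

Lemma lsum_app {T} (ts1 ts2 : list T) g : lsum (ts1 ++ ts2) g = lsum ts1 g + lsum ts2 g.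
Proof. induction ts1 as [|t ts1 IH]; simpl; [|rewrite IH]; ring. Qed.

Lemma lsum_ext {T} (ts : list T) g h : (forall t, g t = h t) -> lsum ts g = lsum ts h.
Proof. intros H; induction ts as [|t ts IH]; simpl; [|rewrite H, IH]; auto. Qed.

Lemma lsum_flat_map {T U} (ts : list T) (F : T -> list U) g :
  lsum (flat_map F ts) g = lsum ts (fun t => lsum (F t) g).
Proof. induction ts as [|t ts IH]; simpl; [|rewrite lsum_app, IH]; auto. Qed.

Lemma lsum_axpy_mul {T} (ts : list T) f g h c :
  lsum ts (fun t => (f t - c * g t) * h t)
  = lsum ts (fun t => f t * h t) - c * lsum ts (fun t => g t * h t).
Proof. induction ts as [|t ts IH]; simpl; [|rewrite IH]; ring. Qed.

Lemma fst_Csum n f : fst (Csum n f) = lsum (seq 0 n) (fun k => fst (f k)).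
Proof.
  induction n as [|n IH]; [reflexivity|].
  rewrite seq_S, lsum_app, <- IH; simpl; ring.
Qed.

Definition biorthogonal {T} (ts : list T) (m : nat) (x y : nat -> T -> R) : Prop :=
  (forall a b, (a < m)%nat -> (b < m)%nat -> a <> b -> lsum ts (fun t => x a t * y b t) = 0) /\
  (forall a, (a < m)%nat -> lsum ts (fun t => x a t * y a t) <> 0).

(* Gaussian elimination of the coordinate [t], using a pivot [x a0 t <> 0]. *)
Lemma biorthogonal_cons {T} (t : T) ts m x y :
  biorthogonal (t :: ts) (S m) x y -> exists x' y', biorthogonal ts m x' y'.
Proof.
  intros [Hoff Hdiag].
  destruct (classic (exists a0, (a0 < S m)%nat /\ x a0 t <> 0)) as [[a0 [Ha0 Hpiv]]|Hnone].
  - set (skip := fun a => if Nat.ltb a a0 then a else S a).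
    assert (Hskip_lt : forall a, (a < m)%nat -> (skip a < S m)%nat)
      by (intros a Ha; unfold skip; destruct (Nat.ltb_spec a a0); lia).
    assert (Hskip_a0 : forall a, skip a <> a0)
      by (intros a; unfold skip; destruct (Nat.ltb_spec a a0); lia).
    assert (Hskip_inj : forall a b, a <> b -> skip a <> skip b)
      by (intros a b; unfold skip; destruct (Nat.ltb_spec a a0), (Nat.ltb_spec b a0); lia).
    exists (fun a s => x (skip a) s - (x (skip a) t / x a0 t) * x a0 s), (fun b => y (skip b)).
    assert (Hpair : forall a b,
      lsum ts (fun s => (x (skip a) s - (x (skip a) t / x a0 t) * x a0 s) * y (skip b) s)
      = lsum (t :: ts) (fun s => x (skip a) s * y (skip b) s)
        - (x (skip a) t / x a0 t) * lsum (t :: ts) (fun s => x a0 s * y (skip b) s)).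
    { intros a b; rewrite lsum_axpy_mul; simpl; field; auto. }
    split.
    + intros a b Ha Hb Hab; rewrite Hpair, Hoff, (Hoff a0); auto; ring.
    + intros a Ha; rewrite Hpair, (Hoff a0), Rmult_0_r, Rminus_0_r; auto.
  - assert (Hzero : forall a, (a < S m)%nat -> x a t = 0)
      by (intros a Ha; apply NNPP; intros E; apply Hnone; eauto).
    exists x, y; split.
    + intros a b Ha Hb Hab; rewrite <- (Hoff a b) by lia; simpl; rewrite Hzero by lia; ring.
    + intros a Ha E; apply (Hdiag a); [lia|]; simpl; rewrite Hzero, E by lia; ring.
Qed.

Lemma not_biorthogonal_succ_length {T} (ts : list T) x y :
  ~ biorthogonal ts (S (length ts)) x y.
Proof.
  revert x y; induction ts as [|t ts IH]; intros x y Hxy.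
  - apply (proj2 Hxy 0%nat); auto.
  - destruct (biorthogonal_cons t ts _ x y Hxy) as [x' [y' H]]; exact (IH x' y' H).
Qed.

(* [Re (z w) = Re z Re w + Im z (- Im w)]: the real part of
   [sum_{l,k < r} al l k * be l k] is a real dot product indexed by [schmidt_index r]. *)
Definition schmidt_index (r : nat) : list (nat * nat * bool) :=
  flat_map (fun l => flat_map (fun k => [(l, k, true); (l, k, false)]) (seq 0 r)) (seq 0 r).

Definition re_im (M : nat -> nat -> C) (t : nat * nat * bool) : R :=
  let '(l, k, re) := t in if re then fst (M l k) else snd (M l k).

Definition re_minus_im (M : nat -> nat -> C) (t : nat * nat * bool) : R :=
  let '(l, k, re) := t in if re then fst (M l k) else - snd (M l k).

Lemma fst_Csum_Cmul r al be :
  fst (Csum r (fun l => Csum r (fun k => Cmul (al l k) (be l k))))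
  = lsum (schmidt_index r) (fun t => re_im al t * re_minus_im be t).
Proof.
  unfold schmidt_index; rewrite lsum_flat_map, fst_Csum; apply lsum_ext; intros l.
  rewrite lsum_flat_map, fst_Csum; apply lsum_ext; intros k; simpl; ring.
Qed.

Lemma projection_linear (P : op) : is_projection P -> is_linear_l2 P.
Proof. intros [_ [HP _]]; exact HP. Qed.

Lemma projection_inner_matrix (P : nat -> op) r (w : nat -> vec) :
  (forall a, is_projection (P a)) -> (forall k, (k < r)%nat -> is_l2 (w k)) ->
  exists M : nat -> nat -> nat -> C,
    forall a l k, (l < r)%nat -> (k < r)%nat -> inner_is (w l) (P a (w k)) (M a l k).
Proof.
  intros HP Hw.
  destruct (functional_choice (fun (t : nat * nat * nat) z => let '(a, l, k) := t in
     (l < r)%nat -> (k < r)%nat -> inner_is (w l) (P a (w k)) z)) as [f Hf].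
  - intros [[a l] k].
    destruct (Nat.lt_ge_cases l r) as [Hl|Hl]; [destruct (Nat.lt_ge_cases k r) as [Hk|Hk]|];
      [|exists C0; intros; lia..].
    destruct (HP a) as [_ [_ [_ Hself]]].
    destruct (Hself (w l) (w k)) as [z [_ Hz]]; auto.
    exists z; auto.
  - exists (fun a l k => f (a, l, k)); intros a l k; exact (Hf (a, l, k)).
Qed.

Lemma finite_schmidt_dot_product p psi A B :
  produces p psi A B -> finite_schmidt_rank psi ->
  exists (ts : list (nat * nat * bool)) (x y : nat -> nat * nat * bool -> R),
    forall a b, p a b 0%nat 0%nat = lsum ts (fun t => x a t * y b t).
Proof.
  intros [_ [HA [HB Hexp]]] [r [u [v [Huv Hpsi]]]].
  assert (HA0 : forall a, is_projection (A 0%nat a)) by (intros; apply HA; lia).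
  assert (HB0 : forall b, is_projection (B 0%nat b)) by (intros; apply HB; lia).
  destruct (projection_inner_matrix (A 0%nat) r u HA0) as [al Hal]; [apply Huv|].
  destruct (projection_inner_matrix (B 0%nat) r v HB0) as [be Hbe]; [apply Huv|].
  exists (schmidt_index r), (fun a => re_im (al a)), (fun b => re_minus_im (be b)).
  intros a b; rewrite <- fst_Csum_Cmul.
  rewrite <- (expect_schmidt psi (A 0%nat a) (B 0%nat b) r u v
                (projection_linear _ (HA0 a)) (projection_linear _ (HB0 b)) Huv Hpsi
                (al a) (be b) (p a b 0%nat 0%nat));
    [reflexivity|apply Hal|apply Hbe|apply Hexp; lia].
Qed.

Lemma diagonal_correlation_not_Cq (p : correlation) :
  (forall a b, a <> b -> p a b 0%nat 0%nat = 0) -> (forall a, p a a 0%nat 0%nat <> 0) ->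
  ~ C_q_3_4 p.
Proof.
  intros Hoff Hdiag [psi [A [B [Hprod Hfsr]]]].
  destruct (finite_schmidt_dot_product p psi A B Hprod Hfsr) as [ts [x [y Hxy]]].
  apply (not_biorthogonal_succ_length ts x y); split.
  - intros a b _ _ Hab; rewrite <- Hxy; auto.
  - intros a _; rewrite <- Hxy; auto.
Qed.

(* [sum_i coeff i ^ 2 = 9/25 / (1 - 16/25) = 1]. *)
Definition coeff (i : nat) : R := 3/5 * (4/5) ^ i.

Definition diag_state : bivec := fun i j => if Nat.eqb i j then (coeff i, 0) else C0.

Definition coord_proj (a : nat) : op := fun v i => if Nat.eqb i a then v i else C0.

Definition diag_correlation : correlation :=
  fun a b _ _ => if Nat.eqb a b then coeff a * coeff a else 0.

Lemma coeff_pos i : 0 < coeff i.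
Proof. unfold coeff; apply Rmult_lt_0_compat; [lra|apply pow_lt; lra]. Qed.

Lemma diag_state_unit : is_unit_state diag_state.
Proof.
  exists (fun i => coeff i * coeff i); split.
  - intros i; apply (infinite_sum_single _ i).
    + intros j Hj; unfold diag_state; destruct (Nat.eqb_spec i j); [lia|].
      unfold Cnorm2; simpl; ring.
    + unfold diag_state; rewrite Nat.eqb_refl; unfold Cnorm2; simpl; ring.
  - assert (Hgeom : infinite_sum (fun n => 1 * (16/25) ^ n) (/ (1 - 16/25)))
      by (apply GP_infinite; rewrite Rabs_right; lra).
    apply (infinite_sum_lincomb _ _ _ (9/25) 0 _ _ _ Hgeom infinite_sum_zero).
    + intros n; unfold coeff; replace (16/25) with (4/5 * (4/5)) by field.
      rewrite Rpow_mult_distr; field.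
    + field.
Qed.

Lemma coord_proj_projection a : is_projection (coord_proj a).
Proof.
  split; [|split; [|split]].
  - intros v _; exists (Cnorm2 (v a)); apply (infinite_sum_single _ a).
    + intros n Hn; unfold coord_proj; destruct (Nat.eqb_spec n a); [lia|].
      unfold Cnorm2; simpl; ring.
    + unfold coord_proj; rewrite Nat.eqb_refl; reflexivity.
  - intros u v c _ _ i; unfold coord_proj; destruct (Nat.eqb i a); auto.
    apply C_eq; simpl; ring.
  - intros v _ i; unfold coord_proj; destruct (Nat.eqb i a); auto.
  - intros u v _ _; exists (Cmul (Cconj (u a)) (v a));
      split; apply (csum_to_single _ a);
      try (intros n Hn; unfold coord_proj; destruct (Nat.eqb_spec n a); [lia|];
           apply C_eq; simpl; ring);
      unfold coord_proj; rewrite Nat.eqb_refl; reflexivity.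
Qed.

Lemma vsum_coord_proj v N i :
  vsum N (fun a => coord_proj a v) i = if Nat.ltb i N then v i else C0.
Proof.
  induction N as [|N IH]; [reflexivity|]; simpl; rewrite IH; unfold coord_proj.
  destruct (Nat.ltb_spec i N), (Nat.eqb_spec i N), (Nat.ltb_spec i (S N)); try lia;
    apply C_eq; simpl; ring.
Qed.

(* The error of the [N]-th partial sum is the tail [L - sum_{i<N} |v_i|^2] of a convergent series. *)
Lemma coord_proj_PVM : is_PVM coord_proj.
Proof.
  split; [apply coord_proj_projection|].
  intros v [L HL] eps Heps.
  set (f := fun i => Cnorm2 (v i)).
  destruct (HL eps Heps) as [N1 HN1].
  exists (S N1); intros N HN l Hl.
  set (head := fun i => if Nat.ltb i N then f i else 0).
  assert (Hhead : infinite_sum head (sum_f_R0 f (N - 1))).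
  { replace (sum_f_R0 f (N - 1)) with (sum_f_R0 head (N - 1)).
    - apply infinite_sum_finite_support; intros n Hn.
      unfold head; destruct (Nat.ltb_spec n N); [lia|auto].
    - apply sum_eq; intros i Hi; unfold head; destruct (Nat.ltb_spec i N); [auto|lia]. }
  assert (Htail : infinite_sum
            (fun i => Cnorm2 (Cadd (vsum N (fun a => coord_proj a v) i) (Copp (v i))))
            (1 * L + (-1) * sum_f_R0 f (N - 1))).
  { apply (infinite_sum_lincomb _ _ _ 1 (-1) _ _ _ HL Hhead); [|reflexivity].
    intros i; rewrite vsum_coord_proj; unfold head, f.
    destruct (Nat.ltb i N); unfold Cnorm2; simpl; ring. }
  rewrite (uniqueness_sum _ _ _ Hl Htail).
  specialize (HN1 (N - 1)%nat ltac:(lia)); fold f in HN1; unfold Rdist in HN1.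
  apply Rabs_def2 in HN1; lra.
Qed.

Lemma diag_state_expect a b :
  expect_is diag_state (coord_proj a) (coord_proj b) (if Nat.eqb a b then coeff a * coeff a else 0).
Proof.
  unfold expect_is, tensor_left, tensor_right, coord_proj.
  exists (fun i => Cmul (Cconj (diag_state i b))
             (if Nat.eqb i a then if Nat.eqb b b then diag_state i b else C0 else C0)).
  split.
  - intros i; apply (csum_to_single _ b); auto.
    intros j Hj; destruct (Nat.eqb_spec j b); [lia|].
    destruct (Nat.eqb i a); apply C_eq; simpl; ring.
  - apply (csum_to_single _ a).
    + intros i Hi; destruct (Nat.eqb_spec i a); [lia|]; apply C_eq; simpl; ring.
    + unfold diag_state; rewrite !Nat.eqb_refl.
      destruct (Nat.eqb_spec a b); apply C_eq; simpl; ring.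
Qed.

Lemma diag_correlation_Cqs : C_qs_3_4 diag_correlation.
Proof.
  exists diag_state, (fun _ => coord_proj), (fun _ => coord_proj).
  split; [apply diag_state_unit|split; [|split]].
  - intros; apply coord_proj_PVM.
  - intros; apply coord_proj_PVM.
  - intros x y a b _ _; apply diag_state_expect.
Qed.

Theorem corollary1 : ~ (forall p : correlation, C_q_3_4 p <-> C_qs_3_4 p).
Proof.
  intros Heq.
  apply (diagonal_correlation_not_Cq diag_correlation).
  - intros a b Hab; unfold diag_correlation; destruct (Nat.eqb_spec a b); [contradiction|auto].
  - intros a; unfold diag_correlation; rewrite Nat.eqb_refl.
    pose proof (coeff_pos a); nra.
  - apply Heq, diag_correlation_Cqs.
Qed.
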